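(* Let $(\mathcal{X},d)$ be a finite metric space $\mathcal{X}=\{x_0,x_1,\dots,x_n\}$ ($n\ge 1$, the $x_i$ pairwise distinct), and let $(\mathcal{Y},\|\cdot\|)$ be a non-trivial, strictly convex real Banach space. For every $y\in\operatorname{Lip}^1_0$ there exist an integer $k\le n+1$, points $y^1,\dots,y^k\in\operatorname{ext}(\operatorname{Lip}^1_0)$ and scalars $\lambda_1,\dots,\lambda_k\ge0$ with $\sum_{i=1}^k\lambda_i=1$ such that $y=\sum_{i=1}^k\lambda_i y^i$.
   Context: $\operatorname{Lip}^1_0$ denotes the set of all $y=(y_0,\dots,y_n)\in\mathcal{Y}^{n+1}$ with $y_0=0$ and $\|y_i-y_j\|\le d(x_i,x_j)$ for all $i,j\in\{0,1,\dots,n\}$; it is a convex subset of $\mathcal{Y}^{n+1}$. $\operatorname{ext}(C)$ denotes the set of extreme points of a convex set $C$ (points $y\in C$ such that $y=\lambda y^1+(1-\lambda)y^2$ with $y^1,y^2\in C$, $\lambda\in(0,1)$ forces $y^1=y^2=y$). *)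

From HB Require Import structures.
From mathcomp Require Import all_boot all_order all_algebra.
From mathcomp Require Import all_classical all_reals all_analysis.
Set Implicit Arguments. Unset Strict Implicit. Unset Printing Implicit Defensive.
Import Order.TTheory GRing.Theory Num.Theory.
Import numFieldNormedType.Exports.
Local Open Scope ring_scope.

(* A metric on the index set {0,...,n}: d i j = d(x_i, x_j), where the
   points x_0,...,x_n are pairwise distinct (d i j = 0 iff i = j). *)
Definition is_metric (n : nat) (R : realType) (d : 'I_n.+1 -> 'I_n.+1 -> R) : Prop :=
  (forall i j, 0 <= d i j) /\
  (forall i j, d i j = 0 <-> i = j) /\
  (forall i j, d i j = d j i) /\
  (forall i j k, d i k <= d i j + d j k).

Definition strictly_convex (R : realType) (Y : normedModType R) : Prop :=
  forall u v : Y, `|u| = 1 -> `|v| = 1 -> u != v -> `|(2%:R)^-1 *: (u + v)| < 1.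

Definition Lip10 (n : nat) (R : realType) (Y : normedModType R)
  (d : 'I_n.+1 -> 'I_n.+1 -> R) (y : 'I_n.+1 -> Y) : Prop :=
  y ord0 = 0 /\ forall i j, `|y i - y j| <= d i j.

Definition is_extreme (n : nat) (R : realType) (Y : normedModType R)
  (C : ('I_n.+1 -> Y) -> Prop) (y : 'I_n.+1 -> Y) : Prop :=
  C y /\
  forall (y1 y2 : 'I_n.+1 -> Y) (lam : R), C y1 -> C y2 -> 0 < lam < 1 ->
    (forall j, y j = lam *: y1 j + (1 - lam) *: y2 j) -> y1 = y /\ y2 = y.

From HB Require Import structures.
From mathcomp Require Import all_boot all_order all_algebra.
From mathcomp Require Import all_classical all_reals all_analysis.
From mathcomp Require Import ring lra.
Set Implicit Arguments. Unset Strict Implicit. Unset Printing Implicit Defensive.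
Import Order.TTheory GRing.Theory Num.Theory.
Import numFieldNormedType.Exports.
Local Open Scope ring_scope.

(* For z in Lip^1_0 call a pair (i, j) tight when |z_i - z_j| = d(x_i, x_j).
   If every index is joined to the base point 0 by a path of tight pairs, z is
   extreme: strict convexity forces both halves of any decomposition of z to
   have the same increments as z along tight pairs.  Otherwise z can be moved
   along a direction v that vanishes at 0 and is constant on tight components;
   moving until a new pair becomes tight (the first "ray exit time" among the
   pairs) strictly lowers the number of tight components.

   Iterating the moving step yields an extreme
   point x = z + v of the face of z; moving z along -v to w = z - s v and
   decomposing w by induction writes z as a convex combination of at most
   (number of tight components of z) <= n + 1 extreme points. *)

Section StrictConvexity.
Variables (R : realType) (Y : normedModType R).

Lemma norm_convex (a b : Y) (lam : R) : 0 <= lam <= 1 ->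
  `|lam *: a + (1 - lam) *: b| <= lam * `|a| + (1 - lam) * `|b|.
Proof.
move=> /andP[l0 l1]; apply: le_trans (ler_normD _ _) _.
by rewrite !normrZ !ger0_norm ?subr_ge0.
Qed.

Hypothesis Ysc : strictly_convex Y.

Lemma strictly_convex_sum (a b : Y) (D : R) : 0 < D ->
  `|a| = D -> `|b| = D -> a != b -> `|a + b| < 2 * D.
Proof.
move=> D0 na nb ab; have Dn0 : D != 0 by rewrite gt_eqF.
have unit_sphere (c : Y) : `|c| = D -> `|D^-1 *: c| = 1.
  by move=> nc; rewrite normrZ nc ger0_norm ?invr_ge0 ?ltW // mulVf.
have scaled_neq : D^-1 *: a != D^-1 *: b.
  apply: contra ab => /eqP /(congr1 ( *:%R D)).
  by rewrite !scalerA mulfV // !scale1r => ->.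
have := Ysc (unit_sphere _ na) (unit_sphere _ nb) scaled_neq.
rewrite -scalerDr scalerA normrZ ger0_norm; last by rewrite mulr_ge0 ?invr_ge0 ?ltW.
have -> : 2^-1 * D^-1 * `|a + b| = `|a + b| / (2 * D) by field.
by rewrite ltr_pdivrMr ?mulr_gt0 // mul1r.
Qed.

Lemma strictly_convex_eq (a b : Y) (D lam : R) : 0 < D ->
  `|a| <= D -> `|b| <= D -> 0 < lam < 1 ->
  `|lam *: a + (1 - lam) *: b| = D -> a = b.
Proof.
move=> D0 a_le b_le lam01 on_sphere; apply/eqP; apply: contraT => ab.
wlog lam_ge_half : a b lam a_le b_le lam01 on_sphere ab / 2^-1 <= lam.
  move=> swap; have [hge|hlt] := lerP 2^-1 lam; first exact: (swap a b lam).
  move: lam01 => /andP[l0 l1].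
  apply: (swap b a (1 - lam)) => //.
  - by apply/andP; split; lra.
  - by rewrite subKr addrC.
  - by rewrite eq_sym.
  - by lra.
move: lam01 => /andP[l0 l1].
have /(norm_convex a b) conv : 0 <= lam <= 1 by rewrite (ltW l0) (ltW l1).
have na : `|a| = D.
  have : (1 - lam) * `|b| <= (1 - lam) * D by rewrite ler_wpM2l // subr_ge0 ltW.
  nra.
have nb : `|b| = D.
  have : lam * `|a| <= lam * D by rewrite ler_wpM2l // ltW.
  nra.
have sum_lt := strictly_convex_sum D0 na nb ab.
have split_ab : lam *: a + (1 - lam) *: b = (1 - lam) *: (a + b) + (2 * lam - 1) *: a.
  by rewrite scalerDr -addrA [X in _ = _ + X]addrC addrA -scalerDl; congr (_ *: _ + _); ring.
suff : `|lam *: a + (1 - lam) *: b| < D by rewrite on_sphere ltxx.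
rewrite split_ab; apply: le_lt_trans (ler_normD _ _) _.
rewrite !normrZ na !ger0_norm ?subr_ge0 ?(ltW l1) //; last by lra.
have : (1 - lam) * `|a + b| < (1 - lam) * (2 * D) by rewrite ltr_pM2l ?subr_gt0.
lra.
Qed.

End StrictConvexity.

Section RayExit.
Variables (R : realType) (Y : normedModType R).

Lemma norm_shift_le (a b : Y) (t s : R) :
  `|a + s *: b| <= `|a + t *: b| + `|s - t| * `|b|.
Proof.
have -> : a + s *: b = (a + t *: b) + (s - t) *: b.
  by rewrite -addrA -scalerDl [t + _]addrC subrK.
by apply: le_trans (ler_normD _ _) _; rewrite normrZ.
Qed.

Definition ray_exit (a b : Y) (D : R) : R :=
  sup [set t : R | 0 <= t /\ `|a + t *: b| <= D]%classic.

Variables (a b : Y) (D : R).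
Hypotheses (b_neq0 : b != 0) (a_in_ball : `|a| <= D).

Local Notation A := [set t : R | 0 <= t /\ `|a + t *: b| <= D]%classic.
Local Notation T := (ray_exit a b D).
Let b_gt0 : 0 < `|b|. Proof. by rewrite normr_gt0. Qed.

Lemma ray_times_has_sup : has_sup A.
Proof.
split; first by exists 0; split => //; rewrite scale0r addr0.
exists ((D + D) / `|b|) => t [t0 ht]; rewrite ler_pdivlMr //.
have : `|t *: b| <= `|a + t *: b| + `|a|.
  by rewrite -[X in `|X|](addKr a) addrC; exact: ler_normB.
rewrite normrZ ger0_norm // => /le_trans; apply; exact: lerD.
Qed.

Lemma ray_exit_ge0 : 0 <= T.
Proof. by apply: (sup_upper_bound ray_times_has_sup); split; rewrite ?scale0r ?addr0. Qed.

(* The ball is closed, so the exit time is itself admissible. *)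
Lemma ray_exit_in_ball : `|a + T *: b| <= D.
Proof.
apply/ler_addgt0Pr => e e0.
have [t [t0 ht]] := sup_adherent (divr_gt0 e0 b_gt0) ray_times_has_sup.
rewrite -/(ray_exit a b D) => htT.
have tT : t <= T by exact: sup_upper_bound ray_times_has_sup _ (conj t0 ht).
apply: le_trans (norm_shift_le a b t T) _; rewrite ger0_norm ?subr_ge0 //.
have : (T - t) * `|b| <= e / `|b| * `|b| by rewrite ler_pM2r //; lra.
rewrite divfK ?gt_eqF //; lra.
Qed.

(* At the exit time the ray lies on the sphere: otherwise it could go further. *)
Lemma ray_exit_on_sphere : `|a + T *: b| = D.
Proof.
apply/eqP; rewrite eq_le ray_exit_in_ball /= leNgt; apply/negP => hlt.
pose del := (D - `|a + T *: b|) / `|b|.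
have del0 : 0 < del by rewrite divr_gt0 // subr_gt0.
have : A (T + del).
  split; first by rewrite addr_ge0 ?ray_exit_ge0 // ltW.
  apply: le_trans (norm_shift_le a b T (T + del)) _.
  rewrite addrAC subrr add0r ger0_norm ?(ltW del0) // divfK ?gt_eqF //; lra.
by move=> /(sup_upper_bound ray_times_has_sup); rewrite -/(ray_exit a b D); lra.
Qed.

(* By convexity of the ball, the whole segment [0, T] is admissible. *)
Lemma ray_before_exit (t : R) : 0 <= t <= T -> `|a + t *: b| <= D.
Proof.
move=> /andP[t0 tT]; have [->|tneqT] := eqVneq t T; first exact: ray_exit_in_ball.
have T0 : 0 < T by rewrite (le_lt_trans t0) // lt_neqAle tneqT.
pose mu := t / T.
have mu01 : 0 <= mu <= 1 by rewrite /mu divr_ge0 ?(ltW T0) //= ler_pdivrMr ?mul1r.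
have -> : a + t *: b = mu *: (a + T *: b) + (1 - mu) *: a.
  rewrite scalerDr scalerA /mu divfK ?gt_eqF // addrAC -scalerDl.
  by rewrite subrKC scale1r.
apply: le_trans (norm_convex _ _ mu01) _.
rewrite ray_exit_on_sphere.
move: mu01 => /andP[mu0 mu1].
have : (1 - mu) * `|a| <= (1 - mu) * D by rewrite ler_wpM2l ?subr_ge0.
lra.
Qed.

End RayExit.

Section Components.
Variables (T : finType) (e : rel T).

Lemma connect_transport (P : T -> Prop) :
  (forall x y, e x y -> P x -> P y) -> forall x y, connect e x y -> P x -> P y.
Proof.
move=> hP x y /connectP[p hp ->]; elim: p x hp => [//|z p IH] x /= /andP[hxz hp] Px.
exact: IH _ hp (hP _ _ hxz Px).
Qed.

Hypothesis e_sym : connect_sym e.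

Lemma n_comp_gt0 (x : T) : (0 < n_comp e T)%N.
Proof. by apply/card_gt0P; exists (fingraph.root e x); rewrite !inE roots_root. Qed.

(* Adding an edge between two components of e strictly decreases the number
   of components: the roots of a coarser relation e' are the image of the
   roots of e under root e', and two roots of e are merged. *)
Lemma n_comp_lt (e' : rel T) (x y : T) : connect_sym e' -> subrel e e' ->
  e' x y -> ~~ connect e x y -> (n_comp e' T < n_comp e T)%N.
Proof.
move=> e'_sym sub_ee' e'xy not_exy.
have conn_sub : subrel (connect e) (connect e').
  by apply: connect_sub => u v /sub_ee'; exact: connect1.
have ncE f : n_comp f T = #|[set r | roots f r]|.
  by apply: eq_card => r; rewrite !inE andbT.
have roots_image : [set r | roots e' r] = fingraph.root e' @: [set r | roots e r].
  apply/setP => r; rewrite inE; apply/idP/imsetP => [/eqP rr | [r' _ ->]].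
    exists (fingraph.root e r); first by rewrite inE roots_root.
    by rewrite -{1}rr; apply/(fingraph.rootP e'_sym)/conn_sub/connect_root.
  exact: roots_root.
rewrite !ncE roots_image ltn_neqAle leq_imset_card andbT.
apply/negP => /imset_injP root_inj; move/negP: not_exy; apply.
apply/(fingraph.rootP e_sym)/root_inj; rewrite ?inE ?roots_root //.
apply/(fingraph.rootP e'_sym).
have conn_root u : connect e' u (fingraph.root e u) by exact/conn_sub/connect_root.
apply: connect_trans (connect_trans (connect1 e'xy) (conn_root y)).
by rewrite e'_sym conn_root.
Qed.

End Components.

Section LipschitzTuples.
Variables (R : realType) (Y : normedModType R) (n : nat)
  (d : 'I_n.+1 -> 'I_n.+1 -> R).
Hypothesis d_metric : is_metric d.

Definition tight (z : 'I_n.+1 -> Y) : rel 'I_n.+1 :=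
  fun i j => `|z i - z j| == d i j.

Definition tight_comps (z : 'I_n.+1 -> Y) : nat := n_comp (tight z) 'I_n.+1.

(* Directions in the face of z: they fix the base point and are constant on
   tight pairs, so moving along them keeps every tight pair tight. *)
Definition face_dir (z v : 'I_n.+1 -> Y) : Prop :=
  v ord0 = 0 /\ forall i j, tight z i j -> v i = v j.

Definition shift (z v : 'I_n.+1 -> Y) (s : R) : 'I_n.+1 -> Y :=
  fun i => z i + s *: v i.

Lemma dist_gt0 (i k : 'I_n.+1) : i != k -> 0 < d i k.
Proof.
case: d_metric => d_ge0 [d_eq0 _] ik; rewrite lt_def d_ge0 andbT.
by apply: contra ik => /eqP/d_eq0 ->.
Qed.

Lemma tight_sym (z : 'I_n.+1 -> Y) : symmetric (tight z).
Proof. by move=> i j; rewrite /tight distrC; case: d_metric => _ [_ [-> _]]. Qed.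

Lemma tight_connect_sym (z : 'I_n.+1 -> Y) : connect_sym (tight z).
Proof. exact/sym_connect_sym/tight_sym. Qed.

Lemma face_dir_connect (z v : 'I_n.+1 -> Y) : face_dir z v ->
  forall i j, connect (tight z) i j -> v i = v j.
Proof.
move=> [_ v_tight] i j conn_ij.
by apply: (@connect_transport _ _ (fun k => v i = v k)) conn_ij _ => // x y /v_tight ->.
Qed.

Lemma shift_sub (z v : 'I_n.+1 -> Y) (s : R) (i k : 'I_n.+1) :
  shift z v s i - shift z v s k = (z i - z k) + s *: (v i - v k).
Proof. by rewrite /shift scalerBr opprD addrACA. Qed.

Lemma tight_shift (z v : 'I_n.+1 -> Y) (s : R) : face_dir z v ->
  subrel (tight z) (tight (shift z v s)).
Proof.
by move=> [_ v_tight] i k tik; rewrite /tight shift_sub (v_tight _ _ tik) subrr scaler0 addr0.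
Qed.

(* Moving z along a nonzero face direction until the first new pair becomes
   tight: for each pair (i, j) on which v varies, the constraint holds
   exactly up to its ray exit time, and we stop at the smallest one. *)
Lemma first_new_tight (z v : 'I_n.+1 -> Y) (j : 'I_n.+1) :
  Lip10 d z -> face_dir z v -> v j != 0 ->
  exists s : R, 0 <= s /\ Lip10 d (shift z v s) /\
    exists i0 j0, tight (shift z v s) i0 j0 /\ v i0 != v j0.
Proof.
move=> [z0 z_lip] [v0 v_tight] vj.
pose P (p : 'I_n.+1 * 'I_n.+1) := v p.1 != v p.2.
pose exit (p : 'I_n.+1 * 'I_n.+1) := ray_exit (z p.1 - z p.2) (v p.1 - v p.2) (d p.1 p.2).
have P0j : P (ord0, j) by rewrite /P /= v0 eq_sym.
have [[i0 j0] Pij hmin] := @Order.TotalTheory.arg_minP _ _ _ (ord0, j) P exit P0j.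
have pair_exit p : P p -> [/\ 0 <= exit p,
   `|(z p.1 - z p.2) + exit p *: (v p.1 - v p.2)| = d p.1 p.2 &
   forall t, 0 <= t <= exit p -> `|(z p.1 - z p.2) + t *: (v p.1 - v p.2)| <= d p.1 p.2].
  move=> Pp; have vp : v p.1 - v p.2 != 0 by rewrite subr_eq0.
  split; [exact: ray_exit_ge0 | exact: ray_exit_on_sphere | exact: ray_before_exit].
have [s0 s_tight _] := pair_exit _ Pij.
exists (exit (i0, j0)); split => //; split.
  split; first by rewrite /shift v0 scaler0 addr0.
  move=> i k; rewrite shift_sub.
  have [e|ne] := eqVneq (v i) (v k); first by rewrite e subrr scaler0 addr0.
  have [_ _ before] := pair_exit (i, k) ne; apply: before.
  by rewrite s0; exact: hmin.
by exists i0, j0; split; rewrite // /tight shift_sub; apply/eqP.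
Qed.

Lemma ray_step (z v : 'I_n.+1 -> Y) (j : 'I_n.+1) :
  Lip10 d z -> face_dir z v -> v j != 0 ->
  exists s : R, 0 <= s /\ Lip10 d (shift z v s) /\
    subrel (tight z) (tight (shift z v s)) /\
    (tight_comps (shift z v s) < tight_comps z)%N.
Proof.
move=> z_lip v_face vj.
have [s [s0 [w_lip [i0 [j0 [w_tight v_ne]]]]]] := first_new_tight z_lip v_face vj.
exists s; do 3!split => //; first exact: tight_shift.
apply: (n_comp_lt (tight_connect_sym z) (tight_connect_sym _) (tight_shift s v_face) w_tight).
by apply: contra v_ne => /(face_dir_connect v_face) ->.
Qed.

Lemma component_dir (z : 'I_n.+1 -> Y) (j : 'I_n.+1) (u : Y) :
  ~~ connect (tight z) ord0 j -> exists v, face_dir z v /\ v j = u.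
Proof.
move=> not_0j; exists (fun i => if connect (tight z) j i then u else 0).
split; last by rewrite connect0.
split; first by rewrite tight_connect_sym (negbTE not_0j).
move=> i k tik; rewrite (same_connect_r (tight_connect_sym z) (connect1 tik)) //.
Qed.

End LipschitzTuples.

Section Decomposition.
Variables (R : realType) (Y : normedModType R) (n : nat)
  (d : 'I_n.+1 -> 'I_n.+1 -> R).
Hypothesis d_metric : is_metric d.

Definition ext_combination (k : nat) (y : 'I_n.+1 -> Y) : Prop :=
  exists (ys : 'I_k -> 'I_n.+1 -> Y) (lam : 'I_k -> R),
    (forall i, is_extreme (Lip10 d) (ys i)) /\
    (forall i, 0 <= lam i) /\
    \sum_(i < k) lam i = 1 /\
    (forall j, y j = \sum_(i < k) lam i *: ys i j).

Lemma ext_combination1 (x : 'I_n.+1 -> Y) :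
  is_extreme (Lip10 d) x -> ext_combination 1 x.
Proof.
move=> x_ext; exists (fun=> x), (fun=> 1); do 3!split => //.
  by rewrite big_ord1.
by move=> j; rewrite big_ord1 scale1r.
Qed.

Lemma ext_combination_cons (k : nat) (x w : 'I_n.+1 -> Y) (t : R) :
  is_extreme (Lip10 d) x -> ext_combination k w -> 0 <= t <= 1 ->
  ext_combination k.+1 (fun j => t *: x j + (1 - t) *: w j).
Proof.
move=> x_ext [ys [lam [ys_ext [lam_ge0 [lam_sum w_comb]]]]] /andP[t0 t1].
exists (fun i => oapp ys x (unlift ord0 i)).
exists (fun i => oapp (fun i' => (1 - t) * lam i') t (unlift ord0 i)).
split; first by move=> i; case: (unlift ord0 i).
split; first by move=> i; case: (unlift ord0 i) => [i'|] //=; rewrite mulr_ge0 ?subr_ge0.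
rewrite big_ord_recl unlift_none /=; under eq_bigr => i _ do rewrite liftK /=.
split; first by rewrite -mulr_sumr lam_sum mulr1 subrKC.
move=> j; rewrite big_ord_recl unlift_none /=.
under eq_bigr => i _ do rewrite liftK /= -scalerA.
by rewrite -scaler_sumr -w_comb.
Qed.

Hypothesis Ysc : strictly_convex Y.

(* If the tight graph of z connects every index to the base point, z is
   extreme: in any decomposition z = lam y1 + (1 - lam) y2, strict convexity
   forces y1 and y2 to have the same increments as z along tight pairs, and
   all three agree at the base point. *)
Lemma extreme_of_connected (z : 'I_n.+1 -> Y) : Lip10 d z ->
  [forall j, connect (tight d z) ord0 j] -> is_extreme (Lip10 d) z.
Proof.
move=> z_lip z_conn; split => // y1 y2 lam [y10 y1_lip] [y20 y2_lip] lam01 z_comb.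
suff agree j : y1 j = z j /\ y2 j = z j by split; apply/funext => j; case: (agree j).
apply: (@connect_transport _ _ (fun j => y1 j = z j /\ y2 j = z j)) (forallP z_conn j) _.
  move=> i k /eqP tik [e1 e2]; have [<-|ik] := eqVneq i k; first by [].
  have zik : z i - z k = lam *: (y1 i - y1 k) + (1 - lam) *: (y2 i - y2 k).
    by rewrite !z_comb !scalerBr opprD addrACA.
  have same_inc : y1 i - y1 k = y2 i - y2 k.
    apply: (strictly_convex_eq Ysc (dist_gt0 d_metric ik) (y1_lip i k) (y2_lip i k) lam01).
    by rewrite -zik.
  have z_inc : z i - z k = y1 i - y1 k by rewrite zik -same_inc -scalerDl subrKC scale1r.
  split; first by rewrite -(subKr (y1 i) (y1 k)) -z_inc e1 subKr.
  by rewrite -(subKr (y2 i) (y2 k)) -same_inc -z_inc e2 subKr.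
by rewrite y10 y20; case: z_lip.
Qed.

Variable u : Y.
Hypothesis u_neq0 : u != 0.

(* Every point of Lip^1_0 can be pushed, along a direction of its face, to
   an extreme point: move an unreached component along u until a new pair
   becomes tight, and repeat; the number of components strictly drops. *)
Lemma extreme_in_face (z : 'I_n.+1 -> Y) : Lip10 d z ->
  exists v, face_dir d z v /\ is_extreme (Lip10 d) (shift z v 1).
Proof.
have [m] := ubnP (tight_comps d z); elim: m z => // m IH z /ltnSE z_comps z_lip.
have [z_conn|/forallPn[j not_0j]] := boolP [forall j, connect (tight d z) ord0 j].
  exists (fun=> 0); split; first by split.
  have -> : shift z (fun=> 0) 1 = z by apply/funext => i; rewrite /shift scaler0 addr0.
  exact: extreme_of_connected.
have [v [v_face vj]] := component_dir d_metric u not_0j.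
have vj_neq0 : v j != 0 by rewrite vj.
have [s [_ [w_lip [sub_tight w_comps]]]] := ray_step d_metric z_lip v_face vj_neq0.
have [v' [[v'0 v'_tight] w_ext]] := IH _ (leq_trans w_comps z_comps) w_lip.
exists (fun i => s *: v i + v' i); split.
  split; first by rewrite v_face.1 v'0 scaler0 addr0.
  by move=> i k tik; rewrite (v_face.2 _ _ tik) (v'_tight i k (sub_tight _ _ tik)).
suff -> : shift z (fun i => s *: v i + v' i) 1 = shift (shift z v s) v' 1 by [].
by apply/funext => i; rewrite /shift !scale1r addrA.
Qed.

(* Take the extreme
   point x = z + v of its face, move z in the opposite direction -v until a
   new pair becomes tight (at w = z - s v), decompose w by induction, and
   write z as a convex combination of x and w. *)
Lemma extreme_decomposition (z : 'I_n.+1 -> Y) : Lip10 d z ->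
  exists k, (k <= tight_comps d z)%N /\ ext_combination k z.
Proof.
have [m] := ubnP (tight_comps d z); elim: m z => // m IH z /ltnSE z_comps z_lip.
have [v [[v0 v_tight] x_ext]] := extreme_in_face z_lip.
have [v_eq0|/forallPn[j vj]] := boolP [forall j, v j == 0].
  exists 1%N; split; first exact: (n_comp_gt0 (tight_connect_sym d_metric z) ord0).
  suff -> : z = shift z v 1 by exact: ext_combination1.
  by apply/funext => i; rewrite /shift (eqP (forallP v_eq0 i)) scaler0 addr0.
have nv_face : face_dir d z (fun i => - v i).
  by split => [|i k /v_tight ->]; rewrite ?v0 ?oppr0.
have nvj : - v j != 0 by rewrite oppr_eq0.
have [s [s0 [w_lip [_ w_comps]]]] := ray_step d_metric z_lip nv_face nvj.
have [k [k_le w_comb]] := IH _ (leq_trans w_comps z_comps) w_lip.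
exists k.+1; split; first exact: leq_ltn_trans k_le w_comps.
have s1 : 1 + s != 0 by rewrite gt_eqF // ltr_pwDl.
pose t := s / (1 + s).
have t01 : 0 <= t <= 1 by rewrite divr_ge0 ?addr_ge0 //= ler_pdivrMr ?ltr_pwDl // mul1r lerDr.
have t_balance : t - (1 - t) * s = 0 by rewrite /t; field.
suff -> : z = fun j => t *: shift z v 1 j + (1 - t) *: shift z (fun i => - v i) s j.
  exact: ext_combination_cons x_ext w_comb t01.
apply/funext => i; rewrite /shift scale1r scalerN !scalerDr scalerN scalerA.
by rewrite addrACA -scalerDl subrKC scale1r -scalerBl t_balance scale0r addr0.
Qed.

End Decomposition.

Theorem theorem2 (R : realType) (Y : completeNormedModType R) (n : nat)
  (d : 'I_n.+1 -> 'I_n.+1 -> R) :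
  (1 <= n)%N -> is_metric d -> (exists u : Y, u != 0) -> strictly_convex Y ->
  forall y : 'I_n.+1 -> Y, Lip10 d y ->
  exists k : nat, (k <= n.+1)%N /\
    exists (ys : 'I_k -> 'I_n.+1 -> Y) (lam : 'I_k -> R),
      (forall i, is_extreme (Lip10 d) (ys i)) /\
      (forall i, 0 <= lam i) /\
      \sum_(i < k) lam i = 1 /\
      (forall j, y j = \sum_(i < k) lam i *: ys i j).
Proof.
move=> _ d_metric [u u_neq0] Ysc y y_lip.
have [k [k_le y_comb]] := extreme_decomposition d_metric Ysc u_neq0 y_lip.
exists k; split; last exact: y_comb.
by apply: leq_trans k_le _; rewrite -[X in (_ <= X)%N]card_ord; exact: max_card.
Qed.
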